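(* Fix $a>0$ and let $\Phi:\mathbb{R}\to\mathbb{R}$ be the static kink on the wormhole of throat radius $a$, i.e. the odd smooth solution of \[ \Phi''(r)+\frac{2r}{r^2+a^2}\Phi'(r) = -2\Phi(r)\bigl(1-\Phi(r)^2\bigr), \qquad r\in\mathbb{R}, \] satisfying $\Phi(r)\to 1$ as $r\to+\infty$ and $\Phi(r)\to -1$ as $r\to-\infty$. Then $\Phi$ is linearly stable: the Schrödinger operator \[ L=-\frac{d^2}{dr^2}+V(r),\qquad V(r)=\frac{a^2}{(r^2+a^2)^2}-2\bigl(1-3\Phi(r)^2\bigr), \] acting on smooth square-integrable functions on $\mathbb{R}$, has no negative eigenvalues; that is, if $v\neq 0$ is smooth and square integrable on $\mathbb{R}$ with $Lv=\omega^2 v$ for some real number $\omega^2$, then $\omega^2\ge 0$.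
   Context: This arises from the field equation $\phi_{tt}=\phi_{rr}+\frac{2r}{r^2+a^2}\phi_r+2\phi(1-\phi^2)$ for spherically symmetric $\phi^4$ fields on the wormhole metric $g=-dt^2+dr^2+(r^2+a^2)(d\vartheta^2+\sin^2\vartheta\,d\varphi^2)$; linearising $\phi=\Phi+e^{i\omega t}(r^2+a^2)^{-1/2}v(r)$ about the static kink $\Phi$ gives the eigenvalue problem $Lv=\omega^2v$. Linear stability of $\Phi$ means that $L$ has no negative eigenvalues. *)

From Stdlib Require Import Reals.
From Coquelicot Require Import Coquelicot.
Open Scope R_scope.

Definition smooth (f : R -> R) : Prop :=
  forall (n : nat) (x : R), ex_derive_n f n x.

Definition square_integrable (f : R -> R) : Prop :=
  ex_RInt_gen (fun x => f x ^ 2) (Rbar_locally m_infty) (Rbar_locally p_infty).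

Definition is_static_kink (a : R) (Phi : R -> R) : Prop :=
  smooth Phi /\
  (forall r, Phi (- r) = - Phi r) /\
  (forall r, Derive_n Phi 2 r + 2 * r / (r ^ 2 + a ^ 2) * Derive Phi r
             = - 2 * Phi r * (1 - Phi r ^ 2)) /\
  is_lim Phi p_infty 1 /\
  is_lim Phi m_infty (-1).

Definition kink_potential (a : R) (Phi : R -> R) (r : R) : R :=
  a ^ 2 / (r ^ 2 + a ^ 2) ^ 2 - 2 * (1 - 3 * Phi r ^ 2).

Definition L_op (a : R) (Phi v : R -> R) (r : R) : R :=
  - Derive_n v 2 r + kink_potential a Phi r * v r.

From Stdlib Require Import Reals Lra Psatz.
From Coquelicot Require Import Coquelicot.
Open Scope R_scope.

(* Suppose L v = omega2 v with omega2 = - mu < 0.  Far from the throat the kink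
   is close to +-1, so V >= 1 there and v v'' >= 0: v^2 is convex on both tails,
   and being integrable it must decrease outwards, so v is bounded.

   The kink itself provides a positive supersolution.  By the maximum principle
   Phi^2 <= 1.  The energy density E = Phi'^2 - (1 - Phi^2)^2 is even and
   satisfies E' = - 4 r Phi'^2 / (r^2 + a^2), so it decreases on r >= 0, while
   E >= - (1 - Phi^2)^2 -> 0; hence E >= 0.  With s = sqrt (r^2 + a^2), the
   function u = s (1 - Phi^2) satisfies - u'' + V u = 2 s E >= 0, and adding a
   small multiple of e^r + e^-r makes - u'' + (V + mu) u > 0 while u grows at
   least linearly.  At a positive maximum M of v / u, the function v - M u would
   have a maximum with positive second derivative, so v <= 0; likewise
   - v <= 0. *)

(** * Calculus on the real line *)

Lemma smooth_is_derive (f : R -> R) (x : R) :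
  smooth f -> is_derive f x (Derive f x).
Proof. intros Hf. apply Derive_correct. exact (Hf 1%nat x). Qed.

Lemma smooth_is_derive2 (f : R -> R) (x : R) :
  smooth f -> is_derive (Derive f) x (Derive_n f 2 x).
Proof. intros Hf. apply (Derive_correct (Derive f)). exact (Hf 2%nat x). Qed.

Lemma is_derive_continuity_pt (f : R -> R) (x l : R) :
  is_derive f x l -> continuity_pt f x.
Proof.
  intros Hf. apply derivable_continuous_pt. exists l. apply is_derive_Reals, Hf.
Qed.

Lemma is_derive_reflect (f : R -> R) (x l : R) :
  is_derive f (- x) l -> is_derive (fun y => f (- y)) x (- l).
Proof.
  intros Hf.
  replace (- l) with (scal (-1) l) by (unfold scal; simpl; unfold mult; simpl; ring).
  apply (is_derive_comp f (fun y => - y) x l (-1) Hf).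
  auto_derive; [exact I | ring].
Qed.

Lemma is_derive_Rmult (f g : R -> R) (x df dg : R) :
  is_derive f x df -> is_derive g x dg ->
  is_derive (fun y => f y * g y) x (df * g x + f x * dg).
Proof. intros Hf Hg. exact (is_derive_mult f g x df dg Hf Hg Rmult_comm). Qed.

Lemma is_lim_p_infty_close (f : R -> R) (l eps : R) :
  is_lim f p_infty l -> 0 < eps -> exists M, forall x, M < x -> Rabs (f x - l) < eps.
Proof.
  intros Hf Heps. apply (Hf (fun y => Rabs (y - l) < eps)).
  exists (mkposreal eps Heps). intros y Hy. exact Hy.
Qed.

Lemma is_lim_m_infty_close (f : R -> R) (l eps : R) :
  is_lim f m_infty l -> 0 < eps -> exists M, forall x, x < M -> Rabs (f x - l) < eps.
Proof.
  intros Hf Heps. apply (Hf (fun y => Rabs (y - l) < eps)).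
  exists (mkposreal eps Heps). intros y Hy. exact Hy.
Qed.

Lemma derive_nonpos_decreasing (f f' : R -> R) (x0 : R) :
  (forall x, is_derive f x (f' x)) -> (forall x, x0 <= x -> f' x <= 0) ->
  forall y, x0 <= y -> f y <= f x0.
Proof.
  intros Hf Hneg y Hy. destruct (Req_dec y x0) as [-> | Hne]; [lra |].
  destruct (MVT_cor2 f f' x0 y) as [xi [Heq Hxi]]; [lra | |].
  - intros x _. apply is_derive_Reals, Hf.
  - assert (f' xi <= 0) by (apply Hneg; lra). nra.
Qed.

Lemma derive_zero_at_max (f : R -> R) (c l : R) :
  is_derive f c l -> (forall x, f x <= f c) -> l = 0.
Proof.
  intros Hf Hmax. apply is_derive_Reals in Hf.
  rewrite <- (derive_pt_eq_0 f c l (exist _ l Hf) Hf).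
  apply (deriv_maximum f (c - 1) (c + 1)); intros; [lra | lra | apply Hmax].
Qed.

Lemma derive2_nonpos_at_max (f f' : R -> R) (c l : R) :
  (forall x, is_derive f x (f' x)) -> is_derive f' c l ->
  (forall x, f x <= f c) -> l <= 0.
Proof.
  intros Hf Hf' Hmax.
  assert (Hc : f' c = 0) by exact (derive_zero_at_max f c (f' c) (Hf c) Hmax).
  destruct (Rle_or_lt l 0) as [| Hl]; [assumption | exfalso].
  apply is_derive_Reals in Hf'.
  destruct (Hf' (l / 2)) as [[d Hd] Hquot]; [lra |]; simpl in Hquot.
  assert (Hincr : forall h, 0 < h < d -> 0 < f' (c + h)).
  { intros h Hh.
    specialize (Hquot h ltac:(lra) ltac:(rewrite Rabs_right; lra)).
    apply Rabs_def2 in Hquot. rewrite Hc, Rminus_0_r in Hquot.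
    replace (f' (c + h)) with (f' (c + h) / h * h) by (field; lra).
    apply Rmult_lt_0_compat; lra. }
  destruct (MVT_cor2 f f' c (c + d / 2)) as [xi [Heq Hxi]]; [lra | |].
  - intros x _. apply is_derive_Reals, Hf.
  - specialize (Hincr (xi - c) ltac:(lra)). replace (c + (xi - c)) with xi in Hincr by ring.
    specialize (Hmax (c + d / 2)). nra.
Qed.

Lemma continuous_attains_max (f : R -> R) (x1 M1 M2 : R) :
  (forall x, continuity_pt f x) ->
  (forall x, M1 < x -> f x < f x1) -> (forall x, x < M2 -> f x < f x1) ->
  exists c, forall x, f x <= f c.
Proof.
  intros Hc Hright Hleft.
  set (lo := Rmin M2 x1). set (hi := Rmax M1 x1).
  assert (Hlo : lo <= x1 /\ lo <= M2) by (split; [apply Rmin_r | apply Rmin_l]).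
  assert (Hhi : x1 <= hi /\ M1 <= hi) by (split; [apply Rmax_r | apply Rmax_l]).
  destruct (continuity_ab_maj f lo hi) as [c [Hmax _]]; [lra | intros; apply Hc |].
  exists c. intros x.
  assert (f x1 <= f c) by (apply Hmax; lra).
  destruct (Rlt_or_le x lo); [specialize (Hleft x); lra |].
  destruct (Rlt_or_le hi x); [specialize (Hright x); lra |].
  apply Hmax; lra.
Qed.

(** * Square-integrable functions with convex tails *)

Lemma ex_RInt_continuity_pt (f : R -> R) (a b : R) :
  (forall x, continuity_pt f x) -> ex_RInt f a b.
Proof.
  intros Hf. apply (ex_RInt_continuous (V := R_CompleteNormedModule)).
  intros x _. apply continuity_pt_filterlim, Hf.
Qed.

Lemma ex_RInt_gen_RInt_bounded (f : R -> R) :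
  (forall x, 0 <= f x) -> (forall x, continuity_pt f x) ->
  ex_RInt_gen f (Rbar_locally m_infty) (Rbar_locally p_infty) ->
  exists K, forall a b, a <= b -> RInt f a b <= K.
Proof.
  intros Hpos Hf [l Hl].
  destruct (Hl (fun y => Rabs (y - l) < 1)) as [P Q [M HM] [N HN] HPQ].
  { exists (mkposreal 1 Rlt_0_1). intros y Hy. exact Hy. }
  exists (Rabs l + 1). intros a b Hab.
  pose proof (Rmin_l a (M - 1)). pose proof (Rmin_r a (M - 1)).
  pose proof (Rmax_l b (N + 1)). pose proof (Rmax_r b (N + 1)).
  set (a' := Rmin a (M - 1)) in *. set (b' := Rmax b (N + 1)) in *.
  destruct (HPQ a' b' (HM a' ltac:(lra)) (HN b' ltac:(lra))) as [y [Hy Hyl]].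
  assert (Hy' : RInt f a' b' = y) by (apply is_RInt_unique; exact Hy).
  assert (Hint : forall s t, ex_RInt f s t) by (intros; apply ex_RInt_continuity_pt, Hf).
  assert (Hsplit : RInt f a' b' = RInt f a' a + RInt f a b + RInt f b b').
  { rewrite <- (RInt_Chasles f a' a b'), <- (RInt_Chasles f a b b'); auto.
    symmetry; apply Rplus_assoc. }
  assert (0 <= RInt f a' a) by (apply RInt_ge_0; auto; lra).
  assert (0 <= RInt f b b') by (apply RInt_ge_0; auto; lra).
  apply Rabs_def2 in Hyl. destruct Hyl. pose proof (Rle_abs l). lra.
Qed.

Lemma ex_RInt_gen_not_ge_1_on_long_intervals (f : R -> R) :
  (forall x, 0 <= f x) -> (forall x, continuity_pt f x) ->
  ex_RInt_gen f (Rbar_locally m_infty) (Rbar_locally p_infty) ->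
  exists L, forall a, ~ (forall x, a <= x <= a + L -> 1 <= f x).
Proof.
  intros Hpos Hf Hint.
  destruct (ex_RInt_gen_RInt_bounded f Hpos Hf Hint) as [K HK].
  exists (Rabs K + 1). intros a Hge.
  assert (Hlong : RInt (fun _ => 1) a (a + (Rabs K + 1)) <= RInt f a (a + (Rabs K + 1))).
  { apply RInt_le.
    - pose proof (Rabs_pos K); lra.
    - apply (ex_RInt_const (V := R_NormedModule)).
    - apply ex_RInt_continuity_pt, Hf.
    - intros x Hx; apply Hge; lra. }
  rewrite RInt_const in Hlong. change (scal ?u 1) with (u * 1) in Hlong.
  specialize (HK a (a + (Rabs K + 1)) ltac:(pose proof (Rabs_pos K); lra)).
  pose proof (Rle_abs K). lra.
Qed.

Lemma convex_tail_nonincreasing (g g' g'' : R -> R) (R0 L : R) :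
  (forall x, is_derive g x (g' x)) -> (forall x, is_derive g' x (g'' x)) ->
  (forall x, R0 <= x -> 0 <= g'' x) -> (forall x, 0 <= g x) ->
  (forall a, ~ (forall x, a <= x <= a + L -> 1 <= g x)) ->
  forall x, R0 <= x -> g' x <= 0.
Proof.
  intros Hg Hg' Hconv Hpos Hthin r1 Hr1.
  destruct (Rle_or_lt (g' r1) 0) as [| Hslope]; [assumption | exfalso].
  assert (Hmono : forall y, r1 <= y -> g' r1 <= g' y).
  { intros y Hy. enough (- g' y <= - g' r1) by lra.
    apply (derive_nonpos_decreasing (fun z => - g' z) (fun z => - g'' z)); auto.
    - intros x. apply (is_derive_opp (K := R_AbsRing) (V := R_NormedModule)), Hg'.
    - intros x Hx. specialize (Hconv x ltac:(lra)). lra. }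
  assert (Htangent : forall y, r1 <= y -> g r1 + g' r1 * (y - r1) <= g y).
  { intros y Hy.
    enough (g r1 + g' r1 * (y - r1) - g y <= g r1 + g' r1 * (r1 - r1) - g r1) by lra.
    apply (derive_nonpos_decreasing (fun z => g r1 + g' r1 * (z - r1) - g z)
             (fun z => g' r1 - g' z)); auto.
    - intros x. apply (is_derive_minus (K := R_AbsRing) (V := R_NormedModule)); [| apply Hg].
      auto_derive; [exact I | ring].
    - intros x Hx. specialize (Hmono x Hx). lra. }
  apply (Hthin (r1 + / g' r1)). intros x Hx.
  assert (Hinv : 0 < / g' r1) by (apply Rinv_0_lt_compat; lra).
  specialize (Htangent x ltac:(lra)). specialize (Hpos r1).
  assert (1 <= g' r1 * (x - r1)); [| lra].
  replace 1 with (g' r1 * / g' r1) by (field; lra).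
  apply Rmult_le_compat_l; lra.
Qed.

Lemma Rabs_le_on_convex_tail (v v' v'' : R -> R) (R0 L : R) :
  (forall x, is_derive v x (v' x)) -> (forall x, is_derive v' x (v'' x)) ->
  (forall x, R0 <= x -> 0 <= v x * v'' x) ->
  (forall a, ~ (forall x, a <= x <= a + L -> 1 <= v x ^ 2)) ->
  forall x, R0 <= x -> Rabs (v x) <= Rabs (v R0).
Proof.
  intros Hv Hv' Hsign Hthin x Hx.
  assert (Hsq : forall y, is_derive (fun z => v z ^ 2) y (2 * v y * v' y)).
  { intros y. replace (2 * v y * v' y) with (INR 2 * v' y * v y ^ Nat.pred 2) by (simpl; ring).
    apply is_derive_pow, Hv. }
  assert (Hsq' : forall y, is_derive (fun z => 2 * v z * v' z) y
                                     (2 * v' y * v' y + 2 * v y * v'' y)).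
  { intros y. apply (is_derive_Rmult (fun z => 2 * v z) v').
    - apply (is_derive_scal v y 2), Hv.
    - apply Hv'. }
  apply Rsqr_le_abs_0. rewrite !Rsqr_pow2.
  apply (derive_nonpos_decreasing _ _ R0 Hsq); [| exact Hx].
  apply (convex_tail_nonincreasing _ _ _ R0 L Hsq Hsq'); [| intros; apply pow2_ge_0 | exact Hthin].
  intros y Hy. specialize (Hsign y Hy). nra.
Qed.

Lemma square_integrable_convex_tails_bounded (v v' v'' : R -> R) (R0 : R) :
  0 <= R0 ->
  (forall x, is_derive v x (v' x)) -> (forall x, is_derive v' x (v'' x)) ->
  (forall x, R0 <= Rabs x -> 0 <= v x * v'' x) ->
  square_integrable v -> exists B, forall x, Rabs (v x) <= B.
Proof.
  intros HR0 Hv Hv' Hsign Hsq.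
  destruct (ex_RInt_gen_not_ge_1_on_long_intervals (fun x => v x ^ 2)) as [L Hthin].
  - intros x. apply pow2_ge_0.
  - intros x. apply (is_derive_continuity_pt _ x _ (is_derive_pow v 2 x _ (Hv x))).
  - exact Hsq.
  - assert (Hright : forall x, R0 <= x -> Rabs (v x) <= Rabs (v R0)).
    { apply (Rabs_le_on_convex_tail v v' v'' R0 L Hv Hv'); [| exact Hthin].
      intros x Hx. apply Hsign. pose proof (Rle_abs x). lra. }
    assert (Hleft : forall x, R0 <= x -> Rabs (v (- x)) <= Rabs (v (- R0))).
    { apply (Rabs_le_on_convex_tail (fun x => v (- x)) (fun x => - v' (- x))
               (fun x => v'' (- x)) R0 L).
      - intros x. apply is_derive_reflect, Hv.
      - intros x. rewrite <- (Ropp_involutive (v'' (- x))).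
        apply (is_derive_opp (K := R_AbsRing) (V := R_NormedModule)), is_derive_reflect, Hv'.
      - intros x Hx. apply Hsign. rewrite Rabs_Ropp. pose proof (Rle_abs x). lra.
      - intros b Hge. apply (Hthin (- b - L)). intros x Hx.
        rewrite <- (Ropp_involutive x). apply Hge. lra. }
    destruct (continuity_ab_maj (fun x => Rabs (v x)) (- R0) R0) as [c [Hc _]]; [lra | |].
    { intros x _. apply (continuity_pt_comp v Rabs).
      - exact (is_derive_continuity_pt _ x _ (Hv x)).
      - apply Rcontinuity_abs. }
    exists (Rabs (v R0) + Rabs (v (- R0)) + Rabs (v c)). intros x.
    pose proof (Rabs_pos (v R0)). pose proof (Rabs_pos (v (- R0))). pose proof (Rabs_pos (v c)).
    destruct (Rle_or_lt R0 x) as [Hx | Hx]; [specialize (Hright x Hx); lra |].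
    destruct (Rle_or_lt x (- R0)) as [Hx' | Hx'].
    + specialize (Hleft (- x) ltac:(lra)). rewrite Ropp_involutive in Hleft. lra.
    + specialize (Hc x ltac:(lra)). lra.
Qed.

(** * A comparison principle *)

Lemma ratio_attains_max (u v : R -> R) (delta B x0 : R) :
  (forall x, continuity_pt u x) -> (forall x, continuity_pt v x) ->
  0 < delta -> (forall x, delta * (1 + Rabs x) <= u x) -> (forall x, v x <= B) ->
  0 < v x0 ->
  exists c M, 0 < M /\ v c = M * u c /\ forall x, v x <= M * u x.
Proof.
  intros Hu Hv Hdelta Hgrow Hbound Hx0.
  assert (Hupos : forall x, 0 < u x).
  { intros x. specialize (Hgrow x). pose proof (Rabs_pos x). nra. }
  set (f := fun x => v x / u x).
  assert (Hf0 : 0 < f x0) by (apply Rdiv_lt_0_compat; auto).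
  assert (HB : 0 < B) by (specialize (Hbound x0); lra).
  set (T := B / (delta * f x0)).
  assert (Hsmall : forall x, T < Rabs x -> f x < f x0).
  { intros x Hx. unfold f at 1. apply Rlt_div_l; [apply Hupos |].
    assert (HT : f x0 * (delta * T) = B) by (unfold T; field; split; lra).
    specialize (Hgrow x). specialize (Hbound x).
    assert (f x0 * (delta * T) < f x0 * u x); [| lra].
    apply Rmult_lt_compat_l; [lra |]. nra. }
  destruct (continuous_attains_max f x0 T (- T)) as [c Hc].
  - intros x. apply continuity_pt_div; [apply Hv | apply Hu | apply Rgt_not_eq, Hupos].
  - intros x Hx. apply Hsmall. pose proof (Rle_abs x). lra.
  - intros x Hx. apply Hsmall. rewrite <- Rabs_Ropp. pose proof (Rle_abs (- x)). lra.
  - exists c, (f c). split; [| split].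
    + specialize (Hc x0). lra.
    + unfold f. field. apply Rgt_not_eq, Hupos.
    + intros x. specialize (Hc x). specialize (Hupos x).
      replace (v x) with (f x * u x) by (unfold f; field; apply Rgt_not_eq; exact Hupos).
      apply Rmult_le_compat_r; lra.
Qed.

Lemma supersolution_comparison (W u u' u'' v v' v'' : R -> R) (delta B : R) :
  (forall x, is_derive u x (u' x)) -> (forall x, is_derive u' x (u'' x)) ->
  (forall x, is_derive v x (v' x)) -> (forall x, is_derive v' x (v'' x)) ->
  0 < delta -> (forall x, delta * (1 + Rabs x) <= u x) ->
  (forall x, 0 < W x * u x - u'' x) ->
  (forall x, v'' x = W x * v x) -> (forall x, v x <= B) ->
  forall x, v x <= 0.
Proof.
  intros Hu Hu' Hv Hv' Hdelta Hgrow Hsuper Hsol Hbound x0.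
  destruct (Rle_or_lt (v x0) 0) as [| Hx0]; [assumption | exfalso].
  destruct (ratio_attains_max u v delta B x0) as (c & M & HM & Hvc & Hle); auto.
  { intros x. exact (is_derive_continuity_pt _ x _ (Hu x)). }
  { intros x. exact (is_derive_continuity_pt _ x _ (Hv x)). }
  assert (Hmax : forall x, v x - M * u x <= v c - M * u c).
  { intros x. specialize (Hle x). lra. }
  assert (Hd : forall x, is_derive (fun y => v y - M * u y) x (v' x - M * u' x)).
  { intros x. apply (is_derive_minus (K := R_AbsRing) (V := R_NormedModule)); [apply Hv |].
    apply (is_derive_scal u x M), Hu. }
  assert (Hd2 : is_derive (fun y => v' y - M * u' y) c (v'' c - M * u'' c)).
  { apply (is_derive_minus (K := R_AbsRing) (V := R_NormedModule)); [apply Hv' |].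
    apply (is_derive_scal u' c M), Hu'. }
  pose proof (derive2_nonpos_at_max _ _ c _ Hd Hd2 Hmax) as Hconcave.
  rewrite Hsol, Hvc in Hconcave. specialize (Hsuper c).
  assert (0 < M * (W c * u c - u'' c)) by (apply Rmult_lt_0_compat; lra).
  nra.
Qed.

Lemma bounded_solution_vanishes (W u u' u'' v v' v'' : R -> R) (delta B : R) :
  (forall x, is_derive u x (u' x)) -> (forall x, is_derive u' x (u'' x)) ->
  (forall x, is_derive v x (v' x)) -> (forall x, is_derive v' x (v'' x)) ->
  0 < delta -> (forall x, delta * (1 + Rabs x) <= u x) ->
  (forall x, 0 < W x * u x - u'' x) ->
  (forall x, v'' x = W x * v x) -> (forall x, Rabs (v x) <= B) ->
  forall x, v x = 0.
Proof.
  intros Hu Hu' Hv Hv' Hdelta Hgrow Hsuper Hsol Hbound x.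
  apply Rle_antisym.
  - apply (supersolution_comparison W u u' u'' v v' v'' delta B); auto.
    intros y. specialize (Hbound y). pose proof (Rle_abs (v y)). lra.
  - enough (- v x <= 0) by lra.
    apply (supersolution_comparison W u u' u'' (fun y => - v y) (fun y => - v' y)
             (fun y => - v'' y) delta B); auto.
    + intros y. apply (is_derive_opp (K := R_AbsRing) (V := R_NormedModule)), Hv.
    + intros y. apply (is_derive_opp (K := R_AbsRing) (V := R_NormedModule)), Hv'.
    + intros y. rewrite Hsol. ring.
    + intros y. specialize (Hbound y). rewrite <- Rabs_Ropp in Hbound.
      pose proof (Rle_abs (- v y)). lra.
Qed.

(** * The static kink and its supersolution *)

Lemma one_add_abs_le_exp_add_exp (x : R) : 1 + Rabs x <= exp x + exp (- x).
Proof.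
  pose proof (exp_ineq1_le x). pose proof (exp_ineq1_le (- x)).
  pose proof (exp_pos x). pose proof (exp_pos (- x)).
  unfold Rabs. destruct (Rcase_abs x); lra.
Qed.

Lemma kink_potential_ge (a : R) (Phi : R -> R) (x : R) :
  6 * Phi x ^ 2 - 2 <= kink_potential a Phi x.
Proof.
  unfold kink_potential.
  assert (0 <= a ^ 2 / (x ^ 2 + a ^ 2) ^ 2).
  { unfold Rdiv. rewrite <- pow_inv. apply Rmult_le_pos; apply pow2_ge_0. }
  lra.
Qed.

Section StaticKink.

Variables (a : R) (Phi : R -> R).
Hypothesis Ha : 0 < a.
Hypothesis HK : is_static_kink a Phi.

Lemma kink_ode (x : R) :
  Derive_n Phi 2 x = - 2 * Phi x * (1 - Phi x ^ 2) - 2 * x / (x ^ 2 + a ^ 2) * Derive Phi x.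
Proof. destruct HK as (_ & _ & Hode & _). specialize (Hode x). lra. Qed.

Lemma kink_le_1 (x : R) : Phi x <= 1.
Proof.
  destruct HK as (Hsmooth & _ & _ & Hp & Hm).
  destruct (Rle_or_lt (Phi x) 1) as [| Hx]; [assumption | exfalso].
  destruct (is_lim_p_infty_close Phi 1 (Phi x - 1) Hp) as [M1 HM1]; [lra |].
  destruct (is_lim_m_infty_close Phi (-1) 1 Hm) as [M2 HM2]; [lra |].
  destruct (continuous_attains_max Phi x M1 M2) as [c Hc].
  - intros y. exact (is_derive_continuity_pt _ y _ (smooth_is_derive Phi y Hsmooth)).
  - intros y Hy. specialize (HM1 y Hy). apply Rabs_def2 in HM1. lra.
  - intros y Hy. specialize (HM2 y Hy). apply Rabs_def2 in HM2. lra.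
  - assert (Hd1 : Derive Phi c = 0)
      by exact (derive_zero_at_max Phi c _ (smooth_is_derive Phi c Hsmooth) Hc).
    assert (Hd2 : Derive_n Phi 2 c <= 0).
    { apply (derive2_nonpos_at_max Phi (Derive Phi) c); [| | exact Hc].
      - intros y. apply smooth_is_derive, Hsmooth.
      - apply smooth_is_derive2, Hsmooth. }
    rewrite kink_ode, Hd1 in Hd2. specialize (Hc x). nra.
Qed.

Lemma kink_sq_le_1 (x : R) : Phi x ^ 2 <= 1.
Proof.
  destruct HK as (_ & Hodd & _).
  pose proof (kink_le_1 x). pose proof (kink_le_1 (- x)) as Hneg. rewrite Hodd in Hneg. nra.
Qed.

Lemma kink_tails : exists R0, 0 < R0 /\ forall x, R0 <= Rabs x -> 1 / 2 <= Phi x ^ 2.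
Proof.
  destruct HK as (_ & Hodd & _ & Hp & _).
  destruct (is_lim_p_infty_close Phi 1 (1 / 4) Hp) as [M HM]; [lra |].
  exists (Rabs M + 1). split; [pose proof (Rabs_pos M); lra |].
  intros x Hx.
  assert (Hsq : Phi x ^ 2 = Phi (Rabs x) ^ 2).
  { unfold Rabs. destruct (Rcase_abs x); [rewrite Hodd |]; ring. }
  rewrite Hsq. specialize (HM (Rabs x) ltac:(pose proof (Rle_abs M); lra)).
  apply Rabs_def2 in HM. nra.
Qed.

Lemma kink_derive_even (x : R) : Derive Phi (- x) = Derive Phi x.
Proof.
  destruct HK as (Hsmooth & Hodd & _).
  symmetry. apply is_derive_unique.
  apply (is_derive_ext (fun y => - Phi (- y))); [intros y; rewrite Hodd; apply Ropp_involutive |].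
  rewrite <- (Ropp_involutive (Derive Phi (- x))).
  apply (is_derive_opp (K := R_AbsRing) (V := R_NormedModule)), is_derive_reflect.
  apply smooth_is_derive, Hsmooth.
Qed.

Definition kink_energy (x : R) : R := Derive Phi x ^ 2 - (1 - Phi x ^ 2) ^ 2.

Lemma is_derive_kink_energy (x : R) :
  is_derive kink_energy x (- (4 * x / (x ^ 2 + a ^ 2)) * Derive Phi x ^ 2).
Proof.
  destruct HK as (Hsmooth & _).
  unfold kink_energy. auto_derive.
  - repeat split; [exact (Hsmooth 2%nat x) | exact (Hsmooth 1%nat x)].
  - change (Derive (fun y => Derive Phi y) x) with (Derive_n Phi 2 x).
    change (Derive (fun y => Phi y) x) with (Derive Phi x).
    rewrite kink_ode. field. nra.
Qed.

Lemma kink_energy_nonneg (x : R) : 0 <= kink_energy x.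
Proof.
  enough (Hpos : forall t, 0 <= t -> 0 <= kink_energy t).
  { destruct (Rle_or_lt 0 x) as [| Hx]; [auto |].
    replace (kink_energy x) with (kink_energy (- x)); [apply Hpos; lra |].
    destruct HK as (_ & Hodd & _). unfold kink_energy. rewrite kink_derive_even, Hodd. ring. }
  intros t Ht.
  destruct (Rle_or_lt 0 (kink_energy t)) as [| Hneg]; [assumption | exfalso].
  destruct HK as (_ & _ & _ & Hp & _).
  assert (Hgap : is_lim (fun y => (1 - Phi y ^ 2) ^ 2) p_infty 0).
  { replace (Finite 0) with (Finite ((1 - 1 ^ 2) ^ 2)) by (f_equal; ring).
    apply (is_lim_comp_continuous Phi (fun s => (1 - s ^ 2) ^ 2)); [exact Hp |].
    apply continuity_pt_filterlim, (is_derive_continuity_pt _ _ 0).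
    auto_derive; [exact I | ring]. }
  destruct (is_lim_p_infty_close _ 0 (- kink_energy t) Hgap) as [M HM]; [lra |].
  set (y := Rmax M t + 1).
  assert (Hy : M < y /\ t <= y).
  { pose proof (Rmax_l M t). pose proof (Rmax_r M t). unfold y. lra. }
  assert (Hdecr : kink_energy y <= kink_energy t).
  { apply (derive_nonpos_decreasing kink_energy _ t is_derive_kink_energy); [| lra].
    intros s Hs. assert (0 <= 4 * s / (s ^ 2 + a ^ 2)) by (apply Rdiv_le_0_compat; nra).
    pose proof (pow2_ge_0 (Derive Phi s)). nra. }
  specialize (HM y (proj1 Hy)). pose proof (Rle_abs ((1 - Phi y ^ 2) ^ 2 - 0)).
  unfold kink_energy in *. pose proof (pow2_ge_0 (Derive Phi y)). lra.
Qed.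

(* The wormhole analogue of the flat-space zero mode tanh' = 1 - tanh^2; since
   kink_energy >= 0, the next two lemmas make it a supersolution of L. *)
Definition kink_mode (x : R) : R := sqrt (x ^ 2 + a ^ 2) * (1 - Phi x ^ 2).

Definition kink_mode_derive (x : R) : R :=
  x / sqrt (x ^ 2 + a ^ 2) * (1 - Phi x ^ 2) - 2 * sqrt (x ^ 2 + a ^ 2) * Phi x * Derive Phi x.

Lemma is_derive_kink_mode (x : R) : is_derive kink_mode x (kink_mode_derive x).
Proof.
  destruct HK as (Hsmooth & _).
  assert (0 < x * (x * 1) + a * (a * 1)) by nra.
  unfold kink_mode, kink_mode_derive. auto_derive.
  - repeat split; auto. exact (Hsmooth 1%nat x).
  - change (Derive (fun y => Phi y) x) with (Derive Phi x).
    replace (x * (x * 1) + a * (a * 1)) with (x ^ 2 + a ^ 2) by ring.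
    assert (0 < sqrt (x ^ 2 + a ^ 2)) by (apply sqrt_lt_R0; nra).
    field. lra.
Qed.

Lemma is_derive_kink_mode_derive (x : R) :
  is_derive kink_mode_derive x
    (kink_potential a Phi x * kink_mode x - 2 * sqrt (x ^ 2 + a ^ 2) * kink_energy x).
Proof.
  destruct HK as (Hsmooth & _).
  assert (0 < x * (x * 1) + a * (a * 1)) by nra.
  unfold kink_mode_derive. auto_derive.
  - repeat split; auto; try exact (Hsmooth 1%nat x); try exact (Hsmooth 2%nat x);
      apply Rgt_not_eq, sqrt_lt_R0; auto.
  - change (Derive (fun y => Phi y) x) with (Derive Phi x).
    change (Derive (fun y => Derive Phi y) x) with (Derive_n Phi 2 x).
    replace (x * (x * 1) + a * (a * 1)) with (x ^ 2 + a ^ 2) by ring.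
    rewrite kink_ode. unfold kink_potential, kink_mode, kink_energy.
    assert (0 < sqrt (x ^ 2 + a ^ 2)) by (apply sqrt_lt_R0; nra).
    assert (sqrt (x ^ 2 + a ^ 2) ^ 2 = x ^ 2 + a ^ 2) by (apply pow2_sqrt; nra).
    set (s := sqrt (x ^ 2 + a ^ 2)) in *.
    replace (a ^ 2) with (s ^ 2 - x ^ 2) by lra. field. lra.
Qed.

Lemma kink_mode_nonneg (x : R) : 0 <= kink_mode x.
Proof. apply Rmult_le_pos; [apply sqrt_pos | pose proof (kink_sq_le_1 x); lra]. Qed.

(* Off the core |x| < R0 the potential is at least 1.  On the core it may be
   negative, but there mu * kink_mode >= mu a / 2 while the exponential term is
   at least - 6 delta e^R0 >= - mu a / 4. *)
Lemma kink_supersolution_margin (mu delta R0 x : R) :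
  0 < mu -> 0 < delta -> 24 * delta * exp R0 <= mu * a ->
  (forall y, R0 <= Rabs y -> 1 / 2 <= Phi y ^ 2) ->
  0 < 2 * sqrt (x ^ 2 + a ^ 2) * kink_energy x + mu * kink_mode x
      + delta * (kink_potential a Phi x - 1 + mu) * (exp x + exp (- x)).
Proof.
  intros Hmu Hdelta Hsmall Htail.
  unfold kink_mode.
  set (s := sqrt (x ^ 2 + a ^ 2)). set (g := exp x + exp (- x)).
  set (V := kink_potential a Phi x).
  assert (Hs : a <= s).
  { rewrite <- (sqrt_pow2 a) by lra. apply sqrt_le_1_alt. nra. }
  assert (Hg : 0 < g) by (unfold g; pose proof (exp_pos x); pose proof (exp_pos (- x)); lra).
  assert (HE : 0 <= s * kink_energy x) by (apply Rmult_le_pos; [lra | apply kink_energy_nonneg]).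
  pose proof (kink_sq_le_1 x) as Hsq. pose proof (kink_potential_ge a Phi x) as HV. fold V in HV.
  destruct (Rle_or_lt (1 / 2) (Phi x ^ 2)) as [Hbig | Hcore].
  - assert (0 <= mu * (s * (1 - Phi x ^ 2))) by (apply Rmult_le_pos; nra).
    assert (0 < delta * (V - 1 + mu) * g).
    { apply Rmult_lt_0_compat; [apply Rmult_lt_0_compat |]; lra. }
    lra.
  - assert (Hx : Rabs x < R0).
    { destruct (Rlt_or_le (Rabs x) R0) as [| Hfar]; [assumption |].
      specialize (Htail x Hfar). lra. }
    assert (Hgx : g <= 2 * exp R0).
    { unfold g. apply Rabs_def2 in Hx.
      assert (exp x < exp R0) by (apply exp_increasing; lra).
      assert (exp (- x) < exp R0) by (apply exp_increasing; lra). lra. }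
    assert (a / 2 <= s * (1 - Phi x ^ 2)) by nra.
    assert (mu * (a / 2) <= mu * (s * (1 - Phi x ^ 2))) by (apply Rmult_le_compat_l; lra).
    assert (0 <= (V + 2 + mu) * (delta * g)).
    { apply Rmult_le_pos; [pose proof (pow2_ge_0 (Phi x)); lra | apply Rmult_le_pos; lra]. }
    assert (delta * g <= delta * (2 * exp R0)) by (apply Rmult_le_compat_l; lra).
    assert (0 < mu * a) by (apply Rmult_lt_0_compat; lra).
    lra.
Qed.

Lemma kink_supersolution (mu : R) :
  0 < mu ->
  exists (u u' u'' : R -> R) (delta : R), 0 < delta /\
    (forall x, is_derive u x (u' x)) /\ (forall x, is_derive u' x (u'' x)) /\
    (forall x, delta * (1 + Rabs x) <= u x) /\
    (forall x, 0 < (kink_potential a Phi x + mu) * u x - u'' x).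
Proof.
  intros Hmu.
  destruct kink_tails as [R0 [HR0 Htail]].
  assert (Hexp : 0 < exp R0) by apply exp_pos.
  set (delta := mu * a / (24 * exp R0)).
  assert (Hdelta : 0 < delta) by (apply Rdiv_lt_0_compat; nra).
  exists (fun x => kink_mode x + delta * (exp x + exp (- x))),
    (fun x => kink_mode_derive x + delta * (exp x - exp (- x))),
    (fun x => kink_potential a Phi x * kink_mode x
              - 2 * sqrt (x ^ 2 + a ^ 2) * kink_energy x + delta * (exp x + exp (- x))),
    delta.
  split; [exact Hdelta |]. split; [| split; [| split]].
  - intros x. apply (is_derive_plus (K := R_AbsRing) (V := R_NormedModule));
      [apply is_derive_kink_mode |]. auto_derive; [exact I | ring].
  - intros x. apply (is_derive_plus (K := R_AbsRing) (V := R_NormedModule));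
      [apply is_derive_kink_mode_derive |]. auto_derive; [exact I | ring].
  - intros x. pose proof (kink_mode_nonneg x). pose proof (one_add_abs_le_exp_add_exp x).
    assert (delta * (1 + Rabs x) <= delta * (exp x + exp (- x)))
      by (apply Rmult_le_compat_l; lra).
    lra.
  - intros x.
    assert (Hmargin : 24 * delta * exp R0 <= mu * a) by (unfold delta; right; field; lra).
    pose proof (kink_supersolution_margin mu delta R0 x Hmu Hdelta Hmargin Htail).
    lra.
Qed.

End StaticKink.

Theorem mainTheorem1 (a : R) (Phi : R -> R) :
  0 < a ->
  is_static_kink a Phi ->
  forall (v : R -> R) (omega2 : R),
    smooth v ->
    square_integrable v ->
    (exists x, v x <> 0) ->
    (forall r, L_op a Phi v r = omega2 * v r) ->
    0 <= omega2.
Proof.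
  intros Ha HK v omega2 Hsmooth Hsq [x0 Hx0] Heigen.
  destruct (Rle_or_lt 0 omega2) as [| Hneg]; [assumption | exfalso].
  set (W := fun x => kink_potential a Phi x - omega2).
  assert (Hv : forall x, is_derive v x (Derive v x)) by (intros; apply smooth_is_derive, Hsmooth).
  assert (Hv' : forall x, is_derive (Derive v) x (Derive_n v 2 x))
    by (intros; apply smooth_is_derive2, Hsmooth).
  assert (Hsol : forall x, Derive_n v 2 x = W x * v x).
  { intros x. specialize (Heigen x). unfold L_op in Heigen. unfold W. lra. }
  destruct (kink_tails a Phi HK) as [R0 [HR0 Htail]].
  destruct (square_integrable_convex_tails_bounded v (Derive v) (Derive_n v 2) R0) as [B HB];
    [lra | exact Hv | exact Hv' | | exact Hsq |].
  { intros x Hx. rewrite Hsol. specialize (Htail x Hx).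
    pose proof (kink_potential_ge a Phi x). unfold W. nra. }
  destruct (kink_supersolution a Phi Ha HK (- omega2))
    as (u & u' & u'' & delta & Hdelta & Hu & Hu' & Hgrow & Hsuper); [lra |].
  apply Hx0.
  exact (bounded_solution_vanishes W u u' u'' v (Derive v) (Derive_n v 2) delta B
           Hu Hu' Hv Hv' Hdelta Hgrow Hsuper Hsol HB x0).
Qed.
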